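(* In the social learning model, assume there exist $c>0$, $k>0$ and $x_0>0$ such that $G_-(-x)=c\,x^{-k}$ and $G_+(x)=1-c\,x^{-k}$ for all $x>x_0$. Then there exists $M>0$ such that, for every realization of the actions, every $t\ge2$ and every $1\le s\le t$, $|\ell_s|\le M\,\ell^*_t$.
   Context: Social learning model. A state $\theta\in\{-1,+1\}$ is drawn with $\mathbb{P}(\theta=+1)=\mathbb{P}(\theta=-1)=1/2$. Agents $t=1,2,\dots$ receive private signals $s_t\in\mathbb{R}$ that are i.i.d. conditionally on $\theta$, with CDF $F_+$ if $\theta=+1$ and $F_-$ if $\theta=-1$; $F_+$ and $F_-$ are mutually absolutely continuous. Let $L_t=\log\frac{\mathbb{P}(\theta=+1\mid s_t)}{\mathbb{P}(\theta=-1\mid s_t)}$ be the private log-likelihood ratio, and let $G_+$, $G_-$ denote the CDFs of $L_t$ conditional on $\theta=+1$, $\theta=-1$ respectively. Signals are assumed unbounded: for every $M\in\mathbb{R}$, $\mathbb{P}(L_t>M)>0$ and $\mathbb{P}(L_t<-M)>0$. Agent $t$ observes $a_1,\dots,a_{t-1}$ and her own signal and chooses $a_t\in\{-1,+1\}$ (utility $1$ if $a_t=\theta$, else $0$). The public belief is $\mu_t=\mathbb{P}(\theta=+1\mid a_1,\dots,a_{t-1})$ and $\ell_t=\log\frac{\mu_t}{1-\mu_t}$ (so $\ell_1=0$). In equilibrium $a_t=+1$ iff $\ell_t+L_t>0$, and otherwise $a_t=-1$. Consequently $\ell_{t+1}=\ell_t+D_+(\ell_t)$ if $a_t=+1$ and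 $\ell_{t+1}=\ell_t+D_-(\ell_t)$ if $a_t=-1$, where $D_+(x)=\log\frac{1-G_+(-x)}{1-G_-(-x)}$ and $D_-(x)=\log\frac{G_+(-x)}{G_-(-x)}$. We write $\mathbb{P}_+(\cdot)=\mathbb{P}(\cdot\mid\theta=+1)$ and $\mathbb{E}_+$ for the corresponding expectation. $\ell^*_t$ denotes the value of $\ell_t$ on the event $a_1=\cdots=a_{t-1}=+1$, i.e., $\ell^*_1=0$ and $\ell^*_{t+1}=\ell^*_t+D_+(\ell^*_t)$. *)

From Stdlib Require Import Reals Lra Lia.
Open Scope R_scope.

Definition is_cdf (G : R -> R) : Prop :=
  (forall x y, x <= y -> G x <= G y) /\
  (forall x eps, 0 < eps -> exists d, 0 < d /\
       forall y, x <= y < x + d -> G y - G x < eps) /\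
  (forall eps, 0 < eps -> exists N, forall x, x <= N -> G x < eps) /\
  (forall eps, 0 < eps -> exists N, forall x, N <= x -> 1 - G x < eps).

(* Gp, Gm are the CDFs (under theta=+1, theta=-1) of the private
   log-likelihood ratio L = log(P(+1|s)/P(-1|s)) with uniform prior.
   This is exactly the statement that the law of L under theta=+1 has
   density e^x w.r.t. its law under theta=-1, which we express on every
   half-open interval (a,b]:
     e^a (Gm b - Gm a) <= Gp b - Gp a <= e^b (Gm b - Gm a). *)
Definition llr_cdfs (Gp Gm : R -> R) : Prop :=
  is_cdf Gp /\ is_cdf Gm /\
  (forall a b, a < b ->
     exp a * (Gm b - Gm a) <= Gp b - Gp a /\
     Gp b - Gp a <= exp b * (Gm b - Gm a)).

(* Unbounded signals: for every M, P(L > M) > 0 and P(L < -M) > 0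
   (unconditional probabilities, prior 1/2 each).  Since the condition is
   for all M, using P(L <= -M) instead of P(L < -M) is equivalent. *)
Definition unbounded_signals (Gp Gm : R -> R) : Prop :=
  forall M, 0 < (1 - Gp M) / 2 + (1 - Gm M) / 2 /\
            0 < Gp (- M) / 2 + Gm (- M) / 2.

Definition Dplus (Gp Gm : R -> R) (x : R) : R :=
  ln ((1 - Gp (- x)) / (1 - Gm (- x))).
Definition Dminus (Gp Gm : R -> R) (x : R) : R :=
  ln (Gp (- x) / Gm (- x)).

(* Actions: a : nat -> bool, where a t = true means a_t = +1 and
   a t = false means a_t = -1; a 0 is unused (agents are 1,2,...).
   ellp Gp Gm a n = ell_{n+1}. *)
Fixpoint ellp (Gp Gm : R -> R) (a : nat -> bool) (n : nat) : R :=
  match n with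
  | O => 0
  | S m => let l := ellp Gp Gm a m in
           if a (S m) then l + Dplus Gp Gm l else l + Dminus Gp Gm l
  end.

Definition ell (Gp Gm : R -> R) (a : nat -> bool) (t : nat) : R :=
  ellp Gp Gm a (t - 1).

Definition ell_star (Gp Gm : R -> R) (t : nat) : R :=
  ell Gp Gm (fun _ => true) t.

From Pilot Require Import Defs.
From Stdlib Require Import Reals Lra Lia.
Open Scope R_scope.

(* Polynomial tails make every step of the all-(+1) path ℓ* push it up by at
   least (c/2)(ℓ* + C)^(-k).  On an arbitrary path, a step in the direction of
   the sign of ℓ moves ℓ by at most g(|ℓ| + C)^(-k), again by the tails; a
   contrarian step either lands in a fixed bounded window or, once |ℓ| is
   large, does not increase |ℓ|, because the likelihood ratio of the signal on
   an interval (ℓ, 3ℓ/2] is at most e^(3|ℓ|/2).  Comparing the two recursions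
   gives |ℓ_n| + C <= λ(ℓ*_n + C) uniformly in the path, and ℓ*_t >= ℓ*_2 > 0
   absorbs the additive constant. *)

Lemma ln_le x y : 0 < x -> x <= y -> ln x <= ln y.
Proof.
  intros Hx [Hlt | ->]; [now left; apply ln_increasing | lra].
Qed.

Lemma exp_le x y : x <= y -> exp x <= exp y.
Proof.
  intros [Hlt | ->]; [now left; apply exp_increasing | lra].
Qed.

Lemma ln_div x y : 0 < x -> 0 < y -> ln (x / y) = ln x - ln y.
Proof.
  intros Hx Hy. unfold Rdiv.
  rewrite ln_mult, ln_Rinv; auto with real.
Qed.

Lemma ln_ge_1_sub_inv x : 0 < x -> 1 - / x <= ln x.
Proof.
  intros Hx. pose proof (exp_ineq1_le (ln (/ x))) as H.
  rewrite exp_ln, ln_Rinv in H by auto with real. lra.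
Qed.

Lemma ln_div_le u v : 0 < u -> 0 < v -> ln (u / v) <= (u - v) / v.
Proof.
  intros Hu Hv. pose proof (exp_ineq1_le (ln (u / v))) as H.
  rewrite exp_ln in H by (apply Rdiv_lt_0_compat; auto).
  replace ((u - v) / v) with (u / v - 1) by (field; lra). lra.
Qed.

Lemma ln_div_ge u v : 0 < u -> 0 < v -> (u - v) / u <= ln (u / v).
Proof.
  intros Hu Hv. pose proof (ln_div_le v u Hv Hu) as H.
  rewrite !ln_div in * by auto.
  replace ((u - v) / u) with (- ((v - u) / u)) by (field; lra). lra.
Qed.

Lemma ln_exp_mul a u : 0 < u -> ln (exp a * u) = a + ln u.
Proof. intros Hu. rewrite ln_mult, ln_exp; auto using exp_pos. Qed.

Lemma Rdiv_le_compat a b c d : 0 <= a <= b -> 0 < d <= c -> a / c <= b / d.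
Proof.
  intros Hab Hdc. unfold Rdiv.
  apply Rmult_le_compat; try lra.
  - left; apply Rinv_0_lt_compat; lra.
  - apply Rinv_le_contravar; lra.
Qed.

Lemma Rpower_pos x y : 0 < Rpower x y.
Proof. apply exp_pos. Qed.

Lemma Rpower_opp_antitone k x y : 0 <= k -> 0 < x <= y -> Rpower y (- k) <= Rpower x (- k).
Proof.
  intros Hk Hxy. rewrite !Rpower_Ropp.
  apply Rinv_le_contravar; [apply Rpower_pos | now apply Rle_Rpower_l].
Qed.

Lemma Rpower_opp_decreasing k x y : 0 < k -> 0 < x < y -> Rpower y (- k) < Rpower x (- k).
Proof.
  intros Hk Hxy. rewrite !Rpower_Ropp.
  apply Rinv_lt_contravar; [apply Rmult_lt_0_compat; apply Rpower_pos | now apply Rlt_Rpower_l].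
Qed.

Lemma Rpower_opp_lt_1 k x : 0 < k -> 1 < x -> Rpower x (- k) < 1.
Proof.
  intros Hk Hx. pose proof (Rpower_opp_decreasing k 1 x Hk ltac:(lra)) as H.
  unfold Rpower at 2 in H. now rewrite ln_1, Rmult_0_r, exp_0 in H.
Qed.

Lemma Rpower_opp_half_le k x y :
  0 <= k -> 0 < y -> y / 2 <= x -> Rpower x (- k) <= Rpower 2 k * Rpower y (- k).
Proof.
  intros Hk Hy Hyx.
  replace (Rpower 2 k * Rpower y (- k)) with (Rpower (y / 2) (- k)).
  - apply Rpower_opp_antitone; lra.
  - unfold Rpower, Rdiv. rewrite ln_mult, ln_Rinv by lra.
    rewrite <- exp_plus. f_equal. ring.
Qed.

Section Comparison.

Variables k C K g beta lam : R.
Hypotheses (Hk : 0 <= k) (HC : 0 < C) (Hg : 0 <= g) (Hbeta : 0 < beta)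
  (Hlam1 : 1 <= lam) (HlamK : K + C <= lam * C)
  (Hlamg : 2 * g * Rpower C (- k) <= lam * C)
  (Hlamb : g * Rpower 2 k <= lam * beta).

Lemma comparison_step x y y' :
  0 <= x -> 0 <= y -> y + C <= lam * (x + C) ->
  y' <= K \/ y' <= y + g * Rpower (y + C) (- k) ->
  y' + C <= lam * (x + beta * Rpower (x + C) (- k) + C).
Proof.
  (* If y + C is at most half of lam (x + C), the slack absorbs g C^(-k);
     otherwise (y + C)^(-k) <= 2^k (lam (x + C))^(-k), dominated by lam beta. *)
  intros Hx Hy Hyx Hy'.
  pose proof (Rpower_pos (x + C) (- k)) as Hpx.
  assert (0 <= lam * (beta * Rpower (x + C) (- k))) by (apply Rmult_le_pos; nra).
  assert (Hgain : lam * (x + C) <= lam * (x + beta * Rpower (x + C) (- k) + C)) by lra.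
  destruct Hy' as [Hsmall | Hgrow]; [nra|].
  set (W := lam * (x + C)) in *.
  destruct (Rle_dec (y + C) (W / 2)) as [Hfar | Hnear].
  - assert (Rpower (y + C) (- k) <= Rpower C (- k)) by (apply Rpower_opp_antitone; lra).
    assert (g * Rpower (y + C) (- k) <= g * Rpower C (- k)) by (apply Rmult_le_compat_l; lra).
    assert (lam * C <= W) by (unfold W; nra).
    lra.
  - assert (Rpower (y + C) (- k) <= Rpower 2 k * Rpower W (- k))
      by (apply Rpower_opp_half_le; unfold W in *; nra).
    assert (Rpower W (- k) <= Rpower (x + C) (- k))
      by (apply Rpower_opp_antitone; unfold W; nra).
    pose proof (Rpower_pos W (- k)). pose proof (Rpower_pos 2 k).
    assert (g * Rpower (y + C) (- k) <= lam * beta * Rpower W (- k)) by nra.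
    assert (lam * beta * Rpower W (- k) <= lam * beta * Rpower (x + C) (- k)) by nra.
    replace (lam * (x + beta * Rpower (x + C) (- k) + C))
      with (W + lam * beta * Rpower (x + C) (- k)) by (unfold W; ring).
    lra.
Qed.

Lemma comparison (X Y : nat -> R) :
  (forall n, 0 <= X n) -> (forall n, 0 <= Y n) -> Y 0%nat = 0 ->
  (forall n, X n + beta * Rpower (X n + C) (- k) <= X (S n)) ->
  (forall n, Y (S n) <= K \/ Y (S n) <= Y n + g * Rpower (Y n + C) (- k)) ->
  forall n, Y n + C <= lam * (X n + C).
Proof.
  intros HX HY HY0 HXS HYS n. induction n as [|n IH].
  - rewrite HY0. pose proof (HX 0%nat). nra.
  - apply Rle_trans with (lam * (X n + beta * Rpower (X n + C) (- k) + C)).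
    + apply comparison_step with (y := Y n); auto.
    + pose proof (HXS n). apply Rmult_le_compat_l; lra.
Qed.

End Comparison.

Lemma comparison_constant_exists k C K g beta :
  0 < C -> 0 <= K -> 0 <= g -> 0 < beta ->
  exists lam, 1 <= lam /\ K + C <= lam * C /\
    2 * g * Rpower C (- k) <= lam * C /\ g * Rpower 2 k <= lam * beta.
Proof.
  intros HC HK Hg Hbeta.
  pose proof (Rpower_pos C (- k)). pose proof (Rpower_pos 2 k).
  set (a := (K + C) / C). set (b := 2 * g * Rpower C (- k) / C).
  set (d := g * Rpower 2 k / beta).
  assert (Ha : a * C = K + C) by (unfold a; field; lra).
  assert (Hb : b * C = 2 * g * Rpower C (- k)) by (unfold b; field; lra).
  assert (Hd : d * beta = g * Rpower 2 k) by (unfold d; field; lra).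
  assert (0 <= a) by nra.
  assert (0 <= b) by nra.
  assert (0 <= d) by nra.
  exists (1 + a + b + d). repeat split; nra.
Qed.

(* [is_cdf] only bounds G from above near -oo, so 0 <= G and G <= 1 are not
   part of it; they follow from the unbounded-signals hypothesis. *)
Lemma cdf_nonneg_of_pair (F G : R -> R) :
  is_cdf F -> is_cdf G -> (forall M, 0 < F (- M) / 2 + G (- M) / 2) ->
  forall y, 0 <= F y.
Proof.
  intros [Fmono _] [_ [_ [Glim _]]] Hpos y.
  apply Rnot_lt_le; intros Hneg.
  destruct (Glim (- F y)) as [N HN]; [lra|].
  pose proof (Hpos (- Rmin y N)) as Hz. rewrite Ropp_involutive in Hz.
  pose proof (Fmono _ _ (Rmin_l y N)). pose proof (HN _ (Rmin_r y N)). lra.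
Qed.

Lemma cdf_le_1_of_pair (F G : R -> R) :
  is_cdf F -> is_cdf G -> (forall M, 0 < (1 - F M) / 2 + (1 - G M) / 2) ->
  forall y, F y <= 1.
Proof.
  intros [Fmono _] [_ [_ [_ Glim]]] Hpos y.
  apply Rnot_lt_le; intros Hbig.
  destruct (Glim (F y - 1)) as [N HN]; [lra|].
  pose proof (Hpos (Rmax y N)).
  pose proof (Fmono _ _ (Rmax_l y N)). pose proof (HN _ (Rmax_r y N)). lra.
Qed.

(* Stdlib's Reals also exports a [Dminus], hence the qualified name. *)
Definition update (Gp Gm : R -> R) (b : bool) (l : R) : R :=
  if b then l + Dplus Gp Gm l else l + Defs.Dminus Gp Gm l.

Lemma ellp_S Gp Gm a n :
  ellp Gp Gm a (S n) = update Gp Gm (a (S n)) (ellp Gp Gm a n).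
Proof. reflexivity. Qed.

Section LikelihoodRatio.

Variables Gp Gm : R -> R.
Hypotheses (Hllr : llr_cdfs Gp Gm) (Hunb : unbounded_signals Gp Gm).

Lemma Gp_cdf : is_cdf Gp. Proof. apply Hllr. Qed.
Lemma Gm_cdf : is_cdf Gm. Proof. apply Hllr. Qed.

Lemma Gp_mono x y : x <= y -> Gp x <= Gp y. Proof. apply Gp_cdf. Qed.
Lemma Gm_mono x y : x <= y -> Gm x <= Gm y. Proof. apply Gm_cdf. Qed.

Lemma llr_interval a b : a < b ->
  exp a * (Gm b - Gm a) <= Gp b - Gp a /\ Gp b - Gp a <= exp b * (Gm b - Gm a).
Proof. apply Hllr. Qed.

Lemma Gp_nonneg y : 0 <= Gp y.
Proof. apply (cdf_nonneg_of_pair Gp Gm Gp_cdf Gm_cdf); apply Hunb. Qed.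

Lemma Gm_nonneg y : 0 <= Gm y.
Proof.
  apply (cdf_nonneg_of_pair Gm Gp Gm_cdf Gp_cdf).
  intros M. destruct (Hunb M). lra.
Qed.

Lemma Gm_le_1 y : Gm y <= 1.
Proof.
  apply (cdf_le_1_of_pair Gm Gp Gm_cdf Gp_cdf).
  intros M. destruct (Hunb M). lra.
Qed.

Lemma Gp_le_1 y : Gp y <= 1.
Proof. apply (cdf_le_1_of_pair Gp Gm Gp_cdf Gm_cdf); apply Hunb. Qed.

Lemma Gp_le_exp_Gm b : Gp b <= exp b * Gm b.
Proof.
  apply Rle_plus_epsilon; intros eps Heps.
  destruct (proj1 (proj2 (proj2 Gp_cdf)) eps Heps) as [N HN].
  set (a := Rmin (b - 1) N).
  assert (Hab : a < b) by (pose proof (Rmin_l (b - 1) N); unfold a; lra).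
  pose proof (HN a (Rmin_r _ _)).
  destruct (llr_interval a b Hab) as [_ Hinc].
  pose proof (Gm_nonneg a). pose proof (exp_pos b). nra.
Qed.

Lemma exp_Gm_compl_le a : exp a * (1 - Gm a) <= 1 - Gp a.
Proof.
  apply Rle_plus_epsilon; intros eps Heps.
  assert (Hea : 0 < eps / exp a) by (apply Rdiv_lt_0_compat; [lra | apply exp_pos]).
  destruct (proj2 (proj2 (proj2 Gm_cdf)) _ Hea) as [N HN].
  set (b := Rmax (a + 1) N).
  assert (Hab : a < b) by (pose proof (Rmax_l (a + 1) N); unfold b; lra).
  pose proof (HN b (Rmax_r _ _)).
  destruct (llr_interval a b Hab) as [Hinc _].
  pose proof (Gp_le_1 b). pose proof (exp_pos a).
  assert (exp a * (1 - Gm b) <= exp a * (eps / exp a)) by (apply Rmult_le_compat_l; lra).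
  replace (exp a * (eps / exp a)) with eps in * by (field; lra).
  lra.
Qed.

Lemma Gp_le_Gm y : Gp y <= Gm y.
Proof.
  destruct (Rle_dec y 0) as [Hy | Hy].
  - pose proof (Gp_le_exp_Gm y). pose proof (exp_le y 0 Hy).
    rewrite exp_0 in *. pose proof (Gm_nonneg y). nra.
  - pose proof (exp_Gm_compl_le y). pose proof (exp_le 0 y ltac:(lra)).
    rewrite exp_0 in *. pose proof (Gm_le_1 y). nra.
Qed.

Lemma Gp_add_half_Gm_le x : 0 <= x -> Gp (- x) + Gm (- x - 1) / 2 <= Gm (- x).
Proof.
  intros Hx.
  destruct (llr_interval (- x - 1) (- x) ltac:(lra)) as [_ Hinc].
  pose proof (Gp_le_exp_Gm (- x - 1)) as Hleft.
  pose proof (Gm_mono (- x - 1) (- x) ltac:(lra)).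
  pose proof (Gm_nonneg (- x - 1)).
  assert (Hexp1 : exp (- x) <= 1) by (rewrite <- exp_0; apply exp_le; lra).
  assert (Hexp2 : exp (- x - 1) <= / 2).
  { replace (- x - 1) with (- (x + 1)) by ring. rewrite exp_Ropp.
    apply Rinv_le_contravar; [lra|]. pose proof (exp_ineq1_le (x + 1)). lra. }
  assert (exp (- x) * (Gm (- x) - Gm (- x - 1)) <= Gm (- x) - Gm (- x - 1)) by nra.
  assert (exp (- x - 1) * Gm (- x - 1) <= / 2 * Gm (- x - 1)) by nra.
  lra.
Qed.


Section PowerTails.

Variables c k x0 C : R.
Hypotheses (Hc : 0 < c) (Hk : 0 < k) (Hx0 : 0 < x0) (HC : x0 + 1 <= C)
  (Htail : forall x, x0 < x ->
     Gm (- x) = c * Rpower x (- k) /\ Gp x = 1 - c * Rpower x (- k)).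

Lemma Gm_tail x : x0 < x -> Gm (- x) = c * Rpower x (- k).
Proof. intros Hx. apply (Htail x Hx). Qed.

Lemma Gp_tail x : x0 < x -> Gp x = 1 - c * Rpower x (- k).
Proof. intros Hx. apply (Htail x Hx). Qed.

Lemma Gm_tail_lt a b : x0 < - b -> a < b -> Gm a < Gm b.
Proof.
  intros Hb Hab.
  rewrite <- (Ropp_involutive a), <- (Ropp_involutive b), !Gm_tail by lra.
  apply Rmult_lt_compat_l; [lra|]. apply Rpower_opp_decreasing; lra.
Qed.

Lemma Gp_tail_lt a b : x0 < a -> a < b -> Gp a < Gp b.
Proof.
  intros Ha Hab. rewrite !Gp_tail by lra.
  pose proof (Rpower_opp_decreasing k a b Hk ltac:(lra)). nra.
Qed.

Lemma Gm_pos y : 0 < Gm y.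
Proof.
  set (z := Rmin y (- (x0 + 1))).
  assert (x0 < - z) by (pose proof (Rmin_r y (- (x0 + 1))); unfold z; lra).
  pose proof (Gm_mono z y (Rmin_l _ _)).
  pose proof (Gm_tail_lt (z - 1) z ltac:(lra) ltac:(lra)).
  pose proof (Gm_nonneg (z - 1)). lra.
Qed.

Lemma Gp_lt_1 y : Gp y < 1.
Proof.
  set (z := Rmax y (x0 + 1)).
  assert (x0 < z) by (pose proof (Rmax_r y (x0 + 1)); unfold z; lra).
  pose proof (Gp_mono y z (Rmax_l _ _)).
  pose proof (Gp_tail_lt z (z + 1) ltac:(lra) ltac:(lra)).
  pose proof (Gp_le_1 (z + 1)). lra.
Qed.

Lemma Gp_pos y : 0 < Gp y.
Proof.
  set (b := Rmin y (- (x0 + 1))).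
  assert (x0 < - b) by (pose proof (Rmin_r y (- (x0 + 1))); unfold b; lra).
  pose proof (Gp_mono b y (Rmin_l _ _)).
  pose proof (Gm_tail_lt (b - 1) b ltac:(lra) ltac:(lra)).
  destruct (llr_interval (b - 1) b ltac:(lra)) as [Hinc _].
  pose proof (exp_pos (b - 1)). pose proof (Gp_nonneg (b - 1)). nra.
Qed.

Lemma Gm_lt_1 y : Gm y < 1.
Proof.
  set (a := Rmax y (x0 + 1)).
  assert (x0 < a) by (pose proof (Rmax_r y (x0 + 1)); unfold a; lra).
  pose proof (Gm_mono y a (Rmax_l _ _)).
  pose proof (Gp_tail_lt a (a + 1) ltac:(lra) ltac:(lra)).
  destruct (llr_interval a (a + 1) ltac:(lra)) as [_ Hinc].
  pose proof (exp_pos (a + 1)). pose proof (Gm_le_1 (a + 1)). nra.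
Qed.

Lemma update_true_nonneg l : 0 <= update Gp Gm true l.
Proof.
  unfold update, Dplus.
  pose proof (Gp_lt_1 (- l)). pose proof (Gm_lt_1 (- l)).
  assert (Hq : 0 < 1 - Gm (- l)) by lra.
  rewrite ln_div by lra.
  pose proof (ln_le _ _ (Rmult_lt_0_compat _ _ (exp_pos (- l)) Hq)
    (exp_Gm_compl_le (- l))) as Hln.
  rewrite ln_exp_mul in Hln by lra. lra.
Qed.

Lemma update_false_nonpos l : update Gp Gm false l <= 0.
Proof.
  unfold update, Defs.Dminus.
  pose proof (Gp_pos (- l)). pose proof (Gm_pos (- l)).
  rewrite ln_div by lra.
  pose proof (ln_le (Gp (- l)) _ ltac:(lra) (Gp_le_exp_Gm (- l))) as Hln.
  rewrite ln_exp_mul in Hln by lra. lra.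
Qed.


(* c 2^k covers m >= C, where m >= (m + C)/2; the second term covers m < C,
   where the tail is at most 1. *)
Definition tail_const := c * Rpower 2 k + / Rpower (2 * C) (- k).

Lemma tail_const_pos : 0 < tail_const.
Proof.
  pose proof (Rpower_pos 2 k). pose proof (Rinv_0_lt_compat _ (Rpower_pos (2 * C) (- k))).
  unfold tail_const. nra.
Qed.

Lemma power_tail_le (T : R -> R) :
  (forall m, x0 < m -> T m = c * Rpower m (- k)) -> (forall m, T m <= 1) ->
  forall m, 0 <= m -> T m <= tail_const * Rpower (m + C) (- k).
Proof.
  intros HT HT1 m Hm.
  pose proof (Rpower_pos (m + C) (- k)). pose proof (Rpower_pos (2 * C) (- k)).
  pose proof (Rpower_pos 2 k).
  assert (Hinv : 0 < / Rpower (2 * C) (- k)) by (apply Rinv_0_lt_compat; lra).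
  unfold tail_const. rewrite Rmult_plus_distr_r.
  destruct (Rle_dec C m) as [Hbig | Hsmall].
  - rewrite HT by lra.
    assert (Rpower m (- k) <= Rpower 2 k * Rpower (m + C) (- k))
      by (apply Rpower_opp_half_le; lra).
    assert (0 <= / Rpower (2 * C) (- k) * Rpower (m + C) (- k)) by nra.
    nra.
  - assert (Rpower (2 * C) (- k) <= Rpower (m + C) (- k))
      by (apply Rpower_opp_antitone; lra).
    assert (1 <= / Rpower (2 * C) (- k) * Rpower (m + C) (- k)).
    { rewrite <- (Rinv_l (Rpower (2 * C) (- k))) by lra.
      apply Rmult_le_compat_l; lra. }
    assert (0 <= c * Rpower 2 k * Rpower (m + C) (- k)) by (apply Rmult_le_pos; nra).
    pose proof (HT1 m). lra.
Qed.

Lemma Gm_left_tail_le m : 0 <= m -> Gm (- m) <= tail_const * Rpower (m + C) (- k).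
Proof.
  apply (power_tail_le (fun m => Gm (- m))); [exact Gm_tail | intros; apply Gm_le_1].
Qed.

Lemma Gp_right_tail_le m : 0 <= m -> 1 - Gp m <= tail_const * Rpower (m + C) (- k).
Proof.
  apply (power_tail_le (fun m => 1 - Gp m)).
  - intros x Hx. rewrite Gp_tail by auto. ring.
  - intros x. pose proof (Gp_nonneg x). lra.
Qed.

Lemma Gm_tail_ge x : 0 <= x -> c * Rpower (x + C) (- k) <= Gm (- x - 1).
Proof.
  intros Hx. set (z := Rmax (x + 1) (x0 + 1)).
  assert (x0 < z) by (pose proof (Rmax_r (x + 1) (x0 + 1)); unfold z; lra).
  assert (z <= x + C) by (unfold z; apply Rmax_lub; lra).
  assert (Hz : Gm (- z) <= Gm (- x - 1))
    by (apply Gm_mono; pose proof (Rmax_l (x + 1) (x0 + 1)); unfold z; lra).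
  rewrite Gm_tail in Hz by lra.
  assert (Rpower (x + C) (- k) <= Rpower z (- k)) by (apply Rpower_opp_antitone; lra).
  nra.
Qed.

Lemma Dplus_ge x : 0 <= x -> c / 2 * Rpower (x + C) (- k) <= Dplus Gp Gm x.
Proof.
  intros Hx. unfold Dplus.
  pose proof (Gp_add_half_Gm_le x Hx). pose proof (Gm_tail_ge x Hx).
  pose proof (Gm_nonneg (- x - 1)).
  pose proof (Gp_nonneg (- x)). pose proof (Gp_lt_1 (- x)). pose proof (Gm_lt_1 (- x)).
  pose proof (ln_div_ge (1 - Gp (- x)) (1 - Gm (- x)) ltac:(lra) ltac:(lra)).
  assert ((Gm (- x) - Gp (- x)) / 1
          <= ((1 - Gp (- x)) - (1 - Gm (- x))) / (1 - Gp (- x)))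
    by (apply Rdiv_le_compat; lra).
  rewrite Rdiv_1_r in *. lra.
Qed.

Lemma ell_star_nonneg n : 0 <= ellp Gp Gm (fun _ => true) n.
Proof.
  destruct n as [|n]; [simpl; lra|].
  rewrite ellp_S. apply update_true_nonneg.
Qed.

Lemma ell_star_growth n :
  ellp Gp Gm (fun _ => true) n
    + c / 2 * Rpower (ellp Gp Gm (fun _ => true) n + C) (- k)
  <= ellp Gp Gm (fun _ => true) (S n).
Proof.
  rewrite ellp_S. unfold update.
  pose proof (Dplus_ge _ (ell_star_nonneg n)). lra.
Qed.

Lemma update_true_le_herd l : 0 <= l ->
  update Gp Gm true l <= l + tail_const / (1 - Gm 0) * Rpower (l + C) (- k).
Proof.
  intros Hl. unfold update, Dplus.
  pose proof (Gp_le_Gm (- l)). pose proof (Gp_nonneg (- l)). pose proof (Gp_lt_1 (- l)).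
  pose proof (Gm_mono (- l) 0 ltac:(lra)). pose proof (Gm_lt_1 0).
  pose proof (ln_div_le (1 - Gp (- l)) (1 - Gm (- l)) ltac:(lra) ltac:(lra)).
  assert (((1 - Gp (- l)) - (1 - Gm (- l))) / (1 - Gm (- l)) <= Gm (- l) / (1 - Gm 0))
    by (apply Rdiv_le_compat; lra).
  assert (Gm (- l) / (1 - Gm 0) <= tail_const * Rpower (l + C) (- k) / (1 - Gm 0)).
  { apply Rdiv_le_compat; [|lra].
    pose proof (Gm_nonneg (- l)). pose proof (Gm_left_tail_le l Hl). lra. }
  replace (tail_const / (1 - Gm 0) * Rpower (l + C) (- k))
    with (tail_const * Rpower (l + C) (- k) / (1 - Gm 0)) by (field; lra).
  lra.
Qed.

Lemma update_false_ge_herd l : l <= 0 ->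
  l - tail_const / Gp 0 * Rpower (- l + C) (- k) <= update Gp Gm false l.
Proof.
  intros Hl. unfold update, Defs.Dminus.
  pose proof (Gp_le_Gm (- l)). pose proof (Gm_le_1 (- l)).
  pose proof (Gp_pos 0). pose proof (Gp_mono 0 (- l) ltac:(lra)).
  pose proof (ln_div_ge (Gp (- l)) (Gm (- l)) ltac:(lra) (Gm_pos (- l))).
  assert ((Gm (- l) - Gp (- l)) / Gp (- l) <= (1 - Gp (- l)) / Gp 0)
    by (apply Rdiv_le_compat; lra).
  assert ((1 - Gp (- l)) / Gp 0 <= tail_const * Rpower (- l + C) (- k) / Gp 0).
  { apply Rdiv_le_compat; [|lra].
    pose proof (Gp_right_tail_le (- l) ltac:(lra)). pose proof (Gp_le_1 (- l)). lra. }
  replace (tail_const / Gp 0 * Rpower (- l + C) (- k))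
    with (tail_const * Rpower (- l + C) (- k) / Gp 0) by (field; lra).
  replace ((Gp (- l) - Gm (- l)) / Gp (- l))
    with (- ((Gm (- l) - Gp (- l)) / Gp (- l))) in * by (field; lra).
  lra.
Qed.

Lemma update_false_ge_small l R : 0 <= l <= R -> - / Gp (- R) <= update Gp Gm false l.
Proof.
  intros Hl. unfold update, Defs.Dminus.
  pose proof (Gp_pos (- l)) as Hp. pose proof (Gm_pos (- l)).
  rewrite ln_div by lra.
  assert (ln (Gm (- l)) <= 0) by (rewrite <- ln_1; apply ln_le; [lra | apply Gm_le_1]).
  pose proof (ln_ge_1_sub_inv _ Hp).
  assert (/ Gp (- l) <= / Gp (- R))
    by (apply Rinv_le_contravar; [apply Gp_pos | apply Gp_mono; lra]).
  lra.
Qed.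

Lemma update_true_le_small l R : - R <= l <= 0 -> update Gp Gm true l <= / (1 - Gm R).
Proof.
  intros Hl. unfold update, Dplus.
  pose proof (Gp_lt_1 (- l)). pose proof (Gp_nonneg (- l)). pose proof (Gm_lt_1 (- l)).
  rewrite ln_div by lra.
  assert (ln (1 - Gp (- l)) <= 0) by (rewrite <- ln_1; apply ln_le; lra).
  pose proof (ln_ge_1_sub_inv (1 - Gm (- l)) ltac:(lra)).
  assert (/ (1 - Gm (- l)) <= / (1 - Gm R)).
  { apply Rinv_le_contravar; [pose proof (Gm_lt_1 R); lra|].
    pose proof (Gm_mono (- l) R ltac:(lra)). lra. }
  lra.
Qed.

Lemma Gp_left_ge l : x0 < l ->
  exp (- (3 / 2 * l)) * ((1 - Rpower (3 / 2) (- k)) * Gm (- l)) <= Gp (- l).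
Proof.
  intros Hl.
  destruct (llr_interval (- (3 / 2 * l)) (- l) ltac:(lra)) as [Hinc _].
  rewrite (Gm_tail l), (Gm_tail (3 / 2 * l)) in Hinc by lra.
  rewrite (Gm_tail l) by lra.
  rewrite <- (Rpower_mult_distr (3 / 2) l) in Hinc by lra.
  pose proof (Gp_nonneg (- (3 / 2 * l))).
  replace ((1 - Rpower (3 / 2) (- k)) * (c * Rpower l (- k)))
    with (c * Rpower l (- k) - c * (Rpower (3 / 2) (- k) * Rpower l (- k))) by ring.
  lra.
Qed.

Lemma Gm_right_ge m : x0 < m ->
  (1 - Rpower (3 / 2) (- k)) * (1 - Gp m) <= exp (3 / 2 * m) * (1 - Gm m).
Proof.
  intros Hm.
  destruct (llr_interval m (3 / 2 * m) ltac:(lra)) as [_ Hinc].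
  rewrite (Gp_tail m), (Gp_tail (3 / 2 * m)) in Hinc by lra.
  rewrite (Gp_tail m) by lra.
  rewrite <- (Rpower_mult_distr (3 / 2) m) in Hinc by lra.
  pose proof (Gm_le_1 (3 / 2 * m)). pose proof (exp_pos (3 / 2 * m)).
  replace ((1 - Rpower (3 / 2) (- k)) * (1 - (1 - c * Rpower m (- k))))
    with (1 - c * (Rpower (3 / 2) (- k) * Rpower m (- k)) - (1 - c * Rpower m (- k)))
    by ring.
  nra.
Qed.

Lemma update_false_ge_large l : x0 < l -> - 2 * ln (1 - Rpower (3 / 2) (- k)) <= l ->
  - l <= update Gp Gm false l.
Proof.
  intros Hl Hth. unfold update, Defs.Dminus.
  pose proof (Gp_pos (- l)). pose proof (Gm_pos (- l)) as Hq.
  assert (H1 : 0 < 1 - Rpower (3 / 2) (- k))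
    by (pose proof (Rpower_opp_lt_1 k (3 / 2) Hk ltac:(lra)); lra).
  pose proof (ln_le _ _ (Rmult_lt_0_compat _ _ (exp_pos _) (Rmult_lt_0_compat _ _ H1 Hq))
    (Gp_left_ge l Hl)) as Hln.
  rewrite ln_exp_mul, ln_mult in Hln by (try apply Rmult_lt_0_compat; lra).
  rewrite ln_div by lra. lra.
Qed.

Lemma update_true_le_large l : x0 < - l -> - 2 * ln (1 - Rpower (3 / 2) (- k)) <= - l ->
  update Gp Gm true l <= - l.
Proof.
  intros Hl Hth. unfold update, Dplus.
  pose proof (Gp_lt_1 (- l)) as Hp. pose proof (Gm_lt_1 (- l)).
  assert (H1 : 0 < 1 - Rpower (3 / 2) (- k))
    by (pose proof (Rpower_opp_lt_1 k (3 / 2) Hk ltac:(lra)); lra).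
  assert (Hp' : 0 < 1 - Gp (- l)) by lra.
  pose proof (ln_le _ _ (Rmult_lt_0_compat _ _ H1 Hp') (Gm_right_ge (- l) Hl)) as Hln.
  rewrite ln_exp_mul, ln_mult in Hln by lra.
  rewrite ln_div by lra. lra.
Qed.

Lemma update_abs_bound : exists K g, 0 <= K /\ 0 < g /\ forall b l,
  Rabs (update Gp Gm b l) <= K \/
  Rabs (update Gp Gm b l) <= Rabs l + g * Rpower (Rabs l + C) (- k).
Proof.
  assert (Hln : ln (1 - Rpower (3 / 2) (- k)) < 0).
  { pose proof (Rpower_opp_lt_1 k (3 / 2) Hk ltac:(lra)).
    pose proof (Rpower_pos (3 / 2) (- k)).
    rewrite <- ln_1. apply ln_increasing; lra. }
  set (R0 := C - 2 * ln (1 - Rpower (3 / 2) (- k))).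
  set (g1 := tail_const / (1 - Gm 0)). set (g2 := tail_const / Gp 0).
  pose proof tail_const_pos. pose proof (Gp_pos 0). pose proof (Gm_lt_1 0).
  assert (0 < g1) by (apply Rdiv_lt_0_compat; lra).
  assert (0 < g2) by (apply Rdiv_lt_0_compat; lra).
  pose proof (Rinv_0_lt_compat _ (Gp_pos (- R0))).
  pose proof (Rinv_0_lt_compat (1 - Gm R0) ltac:(pose proof (Gm_lt_1 R0); lra)).
  exists (/ Gp (- R0) + / (1 - Gm R0)), (g1 + g2).
  split; [lra|]. split; [lra|].
  intros b l. pose proof (Rpower_pos (Rabs l + C) (- k)).
  destruct b.
  - pose proof (update_true_nonneg l).
    rewrite (Rabs_right (update Gp Gm true l)) by lra.
    destruct (Rle_lt_dec 0 l) as [Hl | Hl].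
    + right. rewrite Rabs_right in * by lra.
      pose proof (update_true_le_herd l Hl) as Hu. fold g1 in Hu. nra.
    + rewrite Rabs_left in * by lra. destruct (Rle_lt_dec (- l) R0).
      * left. pose proof (update_true_le_small l R0 ltac:(lra)). lra.
      * right. pose proof (update_true_le_large l ltac:(unfold R0 in *; lra)
                             ltac:(unfold R0 in *; lra)). nra.
  - pose proof (update_false_nonpos l).
    rewrite (Rabs_left1 (update Gp Gm false l)) by lra.
    destruct (Rle_lt_dec l 0) as [Hl | Hl].
    + right. rewrite Rabs_left1 in * by lra.
      pose proof (update_false_ge_herd l Hl) as Hu. fold g2 in Hu. nra.
    + rewrite Rabs_right in * by lra. destruct (Rle_lt_dec l R0).
      * left. pose proof (update_false_ge_small l R0 ltac:(lra)). lra.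
      * right. pose proof (update_false_ge_large l ltac:(unfold R0 in *; lra)
                             ltac:(unfold R0 in *; lra)). nra.
Qed.

Lemma ell_le_ell_star : exists M, 0 < M /\
  forall (a : nat -> bool) (t s : nat), (2 <= t)%nat -> (1 <= s <= t)%nat ->
    Rabs (ell Gp Gm a s) <= M * ell_star Gp Gm t.
Proof.
  destruct update_abs_bound as (K & g & HK & Hg & Hstep).
  destruct (comparison_constant_exists k C K g (c / 2))
    as (lam & Hlam1 & HlamK & Hlamg & Hlamb); try lra.
  set (X := ellp Gp Gm (fun _ => true)).
  assert (Hcmp : forall a n, Rabs (ellp Gp Gm a n) + C <= lam * (X n + C)).
  { intros a. apply (comparison k C K g (c / 2) lam); try lra.
    - exact ell_star_nonneg.
    - intros n. apply Rabs_pos.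
    - apply Rabs_R0.
    - exact ell_star_growth.
    - intros n. rewrite ellp_S. apply Hstep. }
  assert (Hmono : forall m n, (m <= n)%nat -> X m <= X n).
  { intros m n Hmn. apply Rge_le, growing_prop; [|lia].
    intros n'. pose proof (ell_star_growth n'). pose proof (Rpower_pos (X n' + C) (- k)).
    unfold X in *. nra. }
  assert (HX1 : 0 < X 1%nat).
  { pose proof (ell_star_growth 0). pose proof (Rpower_pos (0 + C) (- k)).
    unfold X in *. simpl ellp in *. nra. }
  exists (lam * (1 + C / X 1%nat)). split.
  - assert (0 < C / X 1%nat) by (apply Rdiv_lt_0_compat; lra). nra.
  - intros a t s Ht Hs. unfold ell_star, ell.
    change (ellp Gp Gm (fun _ => true) (t - 1)) with (X (t - 1)%nat).
    pose proof (Hcmp a (s - 1)%nat).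
    pose proof (Hmono (s - 1)%nat (t - 1)%nat ltac:(lia)).
    pose proof (Hmono 1%nat (t - 1)%nat ltac:(lia)).
    assert (C <= C / X 1%nat * X (t - 1)%nat).
    { replace C with (C / X 1%nat * X 1%nat) at 1 by (field; lra).
      apply Rmult_le_compat_l; [left; apply Rdiv_lt_0_compat|]; lra. }
    nra.
Qed.

End PowerTails.

End LikelihoodRatio.

Theorem lemma11 (Gp Gm : R -> R) :
  llr_cdfs Gp Gm ->
  unbounded_signals Gp Gm ->
  (exists c k x0 : R, 0 < c /\ 0 < k /\ 0 < x0 /\
     forall x, x0 < x ->
       Gm (- x) = c * Rpower x (- k) /\ Gp x = 1 - c * Rpower x (- k)) ->
  exists M : R, 0 < M /\
    forall (a : nat -> bool) (t s : nat),
      (2 <= t)%nat -> (1 <= s <= t)%nat ->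
      Rabs (ell Gp Gm a s) <= M * ell_star Gp Gm t.
Proof.
  intros Hllr Hunb (c & k & x0 & Hc & Hk & Hx0 & Htail).
  apply (ell_le_ell_star Gp Gm Hllr Hunb c k x0 (x0 + 1)); auto; lra.
Qed.
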